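(* Let $n\ge 2$ and $T=n$, and consider the following VOM instance: $J=\{1,\dots,n\}$; each $j\in J$ has exactly $n$ neighbors, and the neighborhoods $\mathcal N_j$ are pairwise disjoint except that they all contain one common offline agent $i^*$ (so $|I|=n(n-1)+1$, $i^*$ is adjacent to all of $J$, and every $i\ne i^*$ has exactly one neighbor). Weights: $w_{i^*}=1$ and $w_i=n^{-3}$ for $i\ne i^*$. For $n$ sufficiently large, the vector $x_{ij}=1/n$ for all $(i,j)\in E$ is an optimal solution of LP-VOM with value $1+n^{-2}-n^{-3}$, and SAMP-B run with this $x$ achieves expected total weight $\sum_i w_i\mathbb E[Z_i]$ at most $\big(1-1/e+O(\ln n/n)\big)$ times the LP-VOM optimum. In particular SAMP-B cannot achieve a competitive ratio exceeding $1-1/e$ for VOM.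
   Context: Model. An instance consists of a finite bipartite graph $(I,J,E)$, where $I$ is the set of offline agents and $J$ the set of online agent types, with $|J|=T$, together with weights $w_i\ge 0$. For $i\in I$ let $\mathcal N_i=\{j\in J:(i,j)\in E\}$ and for $j\in J$ let $\mathcal N_j=\{i\in I:(i,j)\in E\}$; write $i\sim j$ (equivalently $j\sim i$) when $(i,j)\in E$. There are $T$ rounds $t=1,\dots,T$; in each round exactly one online agent arrives, whose type is drawn uniformly at random from $J$ (each type with probability $1/T$), independently across rounds. Each offline agent can be matched at most once. When an online agent of type $j$ arrives, an online algorithm must immediately and irrevocably either reject it or match it to a currently unmatched $i\in\mathcal N_j$. Let $Z_i$ be the indicator that offline agent $i$ is matched by the end. VOM maximizes $\sum_{i\in I}w_i\mathbb E[Z_i]$. Benchmark LP. Fix an integer constant $K\ge 1$ independent of $T$. Variables $x_{ij}\ge 0$ for $(i,j)\in E$, with constraints (C1) $\sum_{i\sim j}x_{ij}\le 1$ for all $j\in J$; (C2) $\sum_{j\sim i}x_{ij}\le 1$ for all $i\in I$; (C3) $\sum_{j\in S}x_{ij}\le 1-e^{-|S|}$ for all $i\in I$ and all $S\subseteq\mathcal N_i$ with $|S|\le K$. LP-VOM maximizes $\sum_{i\in I}w_i\sum_{j\sim i}x_{ij}$ subject to (C1)–(C3). SAMP-B (sampling with boosting), given a nonnegative vector $x=(x_{ij})_{(i,j)\in E}$: in each round $t$, when an online agent of type $j$ arrives, let $\mathcal N_{j,t}$ be the set of neighbors of $j$ that are unmatched at the beginning of round $t$; if $\mathcal N_{j,t}=\emptyset$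 (or $\sum_{i'\in\mathcal N_{j,t}}x_{i'j}=0$) reject; otherwise match $j$ to $i\in\mathcal N_{j,t}$ chosen with probability $x_{ij}/\sum_{i'\in\mathcal N_{j,t}}x_{i'j}$. *)

From HB Require Import structures.
From mathcomp Require Import all_boot all_order all_algebra.
From mathcomp Require Import reals sequences exp.
Set Implicit Arguments. Unset Strict Implicit. Unset Printing Implicit Defensive.
Import Order.TTheory GRing.Theory Num.Theory.
Local Open Scope ring_scope.

Section VOM.
Variables (R : realType) (I J : finType) (E : I -> J -> bool) (w : I -> R).

(* LP-VOM with parameter K; x is only meaningful on edges. *)
Definition lp_obj (x : I -> J -> R) : R :=
  \sum_(i : I) w i * \sum_(j : J | E i j) x i j.

Definition lp_feasible (K : nat) (x : I -> J -> R) : Prop :=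
  (forall i j, E i j -> 0 <= x i j) /\
  (forall j : J, \sum_(i : I | E i j) x i j <= 1) /\
  (forall i : I, \sum_(j : J | E i j) x i j <= 1) /\
  (forall (i : I) (S : {set J}),
                (forall j, j \in S -> E i j) -> (#|S| <= K)%N ->
                \sum_(j in S) x i j <= 1 - expR (- (#|S|%:R))).

Definition lp_optimal (K : nat) (x : I -> J -> R) : Prop :=
  lp_feasible K x /\ forall y, lp_feasible K y -> lp_obj y <= lp_obj x.

(* SAMP-B: exact expected final weight, computed by the Markov chain on the
   set M of matched offline agents. [sampb_val x r M] = expected value of
   sum_{i matched at the end} w_i when r rounds remain and M is matched. Each
   round the type j is uniform on J (prob 1/#|J|); if the unmatched neighbors
   of j carry total x-mass 0 (in particular if there are none) j is rejected,
   otherwise i is chosen w.p. x_ij / sum. *)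
Fixpoint sampb_val (x : I -> J -> R) (r : nat) (M : {set I}) : R :=
  match r with
  | 0 => \sum_(i in M) w i
  | r'.+1 =>
      (#|J|%:R)^-1 * \sum_(j : J)
        (let s := \sum_(i : I | E i j && (i \notin M)) x i j in
         if s == 0 then sampb_val x r' M
         else \sum_(i : I | E i j && (i \notin M)) (x i j / s) * sampb_val x r' (i |: M))
  end.

Definition sampb_value (x : I -> J -> R) : R := sampb_val x #|J| set0.

End VOM.

(* Offline agents: None = i*, Some (j, k) = the k-th private neighbor of j
   (k < n-1). Online types: 'I_n. So |I| = n(n-1)+1. *)
Definition inst_I (n : nat) : finType := option ('I_n * 'I_n.-1)%type.
Definition inst_J (n : nat) : finType := 'I_n.

Definition inst_E (n : nat) (i : inst_I n) (j : inst_J n) : bool :=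
  match i with
  | None => true
  | Some (j', _) => j' == j
  end.

Definition inst_w (R : realType) (n : nat) (i : inst_I n) : R :=
  match i with
  | None => 1
  | Some _ => (n%:R ^+ 3)^-1
  end.

Definition inst_x (R : realType) (n : nat) (i : inst_I n) (j : inst_J n) : R :=
  (n%:R)^-1.

(* The uniform vector is feasible once n >= 2K (a set of at most K types gets
   mass at most 1/2 <= 1 - 1/e), and it is optimal because (C1) caps the total
   LP mass at n while i* can carry at most 1 of it (C2) and every other agent
   has weight n^-3.

   For SAMP-B we bound the backward recursion for the expected final weight
   by an explicit potential.  Agents other than i* contribute at most n^-3 per
   round.  As long as a type j has at most m matched private neighbours, an
   arrival of j still has at least L = n - 1 - m unmatched private neighbours,
   so it spares i* with probability at least q = L / (L + 1).  The bad event
   that some type exceeds m matched neighbours is controlled by the load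
   sum_j 2^(matched neighbours of j): a type beyond the threshold contributes
   at least 2^(m+1), and in expectation the load grows by a factor at most
   1 + 1/n per round.  Hence i* is matched with probability at most
   1 - q^n + (L + 1) (1 + 1/n)^n / 2^(m+1).  Taking m = 2 log2 n + 1 makes
   the last term O(1/n) while 1 - q^n = 1 - 1/e + O(log n / n). *)

From mathcomp Require Import all_boot all_order all_algebra.
From mathcomp Require Import reals sequences exp.
From mathcomp Require Import ring lra zify.
Set Implicit Arguments. Unset Strict Implicit. Unset Printing Implicit Defensive.
Import Order.TTheory GRing.Theory Num.Theory.
Local Open Scope ring_scope.

Lemma sumr_option (V : nmodType) (T : finType) (P : pred (option T))
    (F : option T -> V) :
  \sum_(o | P o) F o =
  (if P None then F None else 0) + \sum_(t | P (Some t)) F (Some t).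
Proof.
rewrite big_mkcond (bigD1 None) //=; congr (_ + _).
rewrite (reindex_omap Some id) /=; last by case.
by rewrite [RHS]big_mkcond; apply: eq_big => // t; rewrite eqxx.
Qed.

Lemma sumr_const_cond (V : nmodType) (T : finType) (P : pred T) (c : V) :
  \sum_(t | P t) c = c *+ #|[set t | P t]|.
Proof. by rewrite -sumr_const; apply: eq_bigl => t; rewrite inE. Qed.

Section SampBStep.
Variables (R : realType) (I J : finType) (E : I -> J -> bool) (w : I -> R).
Variable x : I -> J -> R.
Hypothesis x_ge0 : forall i j, E i j -> 0 <= x i j.

Definition sampb_arrival (f : {set I} -> R) (M : {set I}) (j : J) : R :=
  let s := \sum_(i | E i j && (i \notin M)) x i j in
  if s == 0 then f M
  else \sum_(i | E i j && (i \notin M)) (x i j / s) * f (i |: M).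

Definition sampb_step (f : {set I} -> R) (M : {set I}) : R :=
  (#|J|%:R)^-1 * \sum_j sampb_arrival f M j.

Lemma sampb_arrival_le (f : {set I} -> R) (M : {set I}) (j : J) (c : R) :
  f M <= c -> (forall i, E i j -> i \notin M -> f (i |: M) <= c) ->
  sampb_arrival f M j <= c.
Proof.
rewrite /sampb_arrival => fMc fiMc /=; case: eqP => // /eqP s_neq0.
set s := \sum_(i | _) _ in s_neq0 *.
have s_ge0 : 0 <= s by apply: sumr_ge0 => i /andP[/x_ge0].
apply: (@le_trans _ _ (\sum_(i | E i j && (i \notin M)) (x i j / s) * c)).
  apply: ler_sum => i /andP[Eij iM]; rewrite ler_wpM2l ?fiMc //.
  by rewrite divr_ge0 ?x_ge0.
by rewrite -mulr_suml -mulr_suml divff // mul1r.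
Qed.

Lemma sampb_arrival_ler (f g : {set I} -> R) (M : {set I}) (j : J) :
  (forall M' : {set I}, f M' <= g M') ->
  sampb_arrival f M j <= sampb_arrival g M j.
Proof.
rewrite /sampb_arrival => fg /=; case: ifP => // _.
apply: ler_sum => i /andP[Eij _]; rewrite ler_wpM2l //.
by rewrite divr_ge0 ?x_ge0 // sumr_ge0 // => i' /andP[/x_ge0].
Qed.

Lemma sampb_step_le_mean (f : {set I} -> R) (M : {set I}) (g : J -> R) :
  (forall j, sampb_arrival f M j <= g j) ->
  sampb_step f M <= (#|J|%:R)^-1 * \sum_j g j.
Proof. by move=> fg; rewrite ler_wpM2l ?invr_ge0 // ler_sum. Qed.

Lemma sampb_step_le_const (f : {set I} -> R) (M : {set I}) (c : R) :
  (0 < #|J|)%N -> (forall j, sampb_arrival f M j <= c) -> sampb_step f M <= c.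
Proof.
move=> J_gt0 /sampb_step_le_mean/le_trans; apply.
by rewrite sumr_const -[c *+ _]mulr_natr mulrCA mulVf ?mulr1 // pnatr_eq0 -lt0n.
Qed.

Lemma sampb_step_ler (f g : {set I} -> R) (M : {set I}) :
  (forall M' : {set I}, f M' <= g M') -> sampb_step f M <= sampb_step g M.
Proof.
move=> fg; rewrite ler_wpM2l ?invr_ge0 //.
by apply: ler_sum => j _; exact: sampb_arrival_ler.
Qed.

Lemma sampb_val_le (Phi : nat -> {set I} -> R) :
  (forall M : {set I}, \sum_(i in M) w i <= Phi 0%N M) ->
  (forall r M, sampb_step (Phi r) M <= Phi r.+1 M) ->
  forall r M, sampb_val E w x r M <= Phi r M.
Proof.
move=> Phi0 PhiS; elim=> [|r IH] M; first exact: Phi0.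
by apply: le_trans (PhiS r M); exact: sampb_step_ler.
Qed.

End SampBStep.

(* [(1 + d * min 1 X) / (1 + d)] is the i*-part of the potential below after an
   arrival whose type has [d] free private neighbours: each of the [1 + d]
   unmatched neighbours is chosen with the same probability. *)
Lemma mean_one_min_le1 (R : realFieldType) (d X : R) : 0 <= d ->
  (1 + d * Num.min 1 X) / (1 + d) <= 1.
Proof.
move=> d_ge0; rewrite ler_pdivrMr ?mul1r ?lerD2l; last by rewrite ltr_wpDr.
by rewrite -[X in _ <= X]mulr1 ler_wpM2l // ge_min lexx.
Qed.

Lemma mean_one_min_le (R : realFieldType) (d X q Q b : R) :
  0 <= d -> 0 <= q <= 1 -> 1 - X <= Q -> 0 <= Q -> 0 <= b ->
  q * (1 + d) <= d \/ 1 <= b ->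
  (1 + d * Num.min 1 X) / (1 + d) <= 1 - q * (1 - X) + Q * b.
Proof.
move=> d_ge0 /andP[q_ge0 q_le1] XQ Q_ge0 b_ge0 q_small_or_b_large.
have Qb_ge0 : 0 <= Q * b by rewrite mulr_ge0.
have d1_gt0 : 0 < 1 + d by lra.
have [X_ge1|X_lt1] := leP 1 X.
  rewrite mulr1 divff ?gt_eqF //.
  have : 0 <= q * (X - 1) by rewrite mulr_ge0 // subr_ge0.
  lra.
rewrite ler_pdivrMr //.
have X1_ge0 : 0 <= 1 - X by lra.
case: q_small_or_b_large => [q_small|b_ge1].
  have := ler_wpM2r X1_ge0 q_small; have := mulr_ge0 Qb_ge0 (ltW d1_gt0); nra.
have : Q <= Q * b by rewrite -[X in X <= _]mulr1 ler_wpM2l.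
have : q * (1 - X) <= 1 - X by rewrite -[X in _ <= X]mul1r ler_wpM2r.
nra.
Qed.

Lemma expRN1_le_half (R : realType) : expR (-1) <= 2^-1 :> R.
Proof.
rewrite expRN lef_pV2 ?posrE ?expR_gt0 //.
by apply: le_trans (expR_ge1Dx 1); rewrite [2]mulr2n.
Qed.

Lemma expRN_inv_le_ratio (R : realType) (L : nat) : (0 < L)%N ->
  expR (- (L%:R : R)^-1) <= L%:R / L.+1%:R.
Proof.
move=> L_gt0; have L_gt0' : 0 < L%:R :> R by rewrite ltr0n.
rewrite expRN -[_ / _]invrK invf_div lef_pV2 ?posrE ?expR_gt0 ?divr_gt0 //.
by rewrite -natr1 mulrDl divff ?gt_eqF // mul1r expR_ge1Dx.
Qed.

Lemma ratio_pow_ge (R : realType) (L n : nat) : (0 < L)%N -> (L <= n)%N ->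
  expR (-1) - (n%:R - L%:R) / L%:R <= (L%:R / L.+1%:R : R) ^+ n.
Proof.
move=> L_gt0 Ln; have L_gt0' : 0 < L%:R :> R by rewrite ltr0n.
set y : R := (n%:R - L%:R) / L%:R.
have y_ge0 : 0 <= y by rewrite divr_ge0 ?subr_ge0 ?ler_nat // ltW.
have pow_ge : expR (-1 - y) <= (L%:R / L.+1%:R) ^+ n.
  have -> : -1 - y = n%:R * - (L%:R : R)^-1.
    by rewrite /y; field; exact: lt0r_neq0.
  rewrite expRM_natl lerXn2r ?nnegrE ?expR_ge0 ?expRN_inv_le_ratio //.
  by apply: le_trans (expRN_inv_le_ratio R L_gt0); exact: expR_ge0.
apply: le_trans pow_ge; rewrite expRD.
have e_le1 : expR (-1) <= 1 :> R by rewrite expR_le1 lerN10.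
have := ler_wpM2l (expR_ge0 (-1 : R)) (expR_ge1Dx (- y)).
have := ler_wpM2r y_ge0 e_le1; lra.
Qed.

Lemma pow_1Dinv_le_expR1 (R : realType) (n : nat) : (0 < n)%N ->
  (1 + (n%:R : R)^-1) ^+ n <= expR 1.
Proof.
move=> n_gt0; have n_gt0' : 0 < n%:R :> R by rewrite ltr0n.
apply: (@le_trans _ _ (expR (n%:R^-1) ^+ n)).
  by rewrite lerXn2r ?nnegrE ?expR_ge1Dx ?expR_ge0 // addr_ge0 // invr_ge0 ltW.
by rewrite -expRM_natl mulfV ?gt_eqF.
Qed.

Lemma mul4S_leq_exp2 (t : nat) : (5 <= t)%N -> (4 * t.+1 <= 2 ^ t)%N.
Proof.
elim: t => // t IH; rewrite leq_eqVlt => /orP[/eqP <- //|t_ge5].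
by have := IH t_ge5; rewrite expnS; lia.
Qed.

Lemma log2_affine_le_ln (R : realType) (n t : nat) :
  (2 <= n)%N -> (2 ^ t <= n)%N ->
  (4 * t.+1)%:R + expR 1 + 1 <= (9 + expR 1) / ln 2 * ln (n%:R : R).
Proof.
move=> n_ge2 tn.
have ln2_gt0 : 0 < ln (2 : R) by rewrite ln_gt0 // ltr1n.
have n_gt0 : 0 < n%:R :> R by rewrite ltr0n (leq_trans _ n_ge2).
pose l := ln (n%:R : R) / ln 2.
have l_ge1 : 1 <= l by rewrite ler_pdivlMr // mul1r ler_ln ?posrE // ler_nat.
have t_le_l : t%:R <= l.
  rewrite ler_pdivlMr // mulr_natl -lnXn // ler_ln ?posrE ?exprn_gt0 //.
  by rewrite -natrX ler_nat.
have -> : (9 + expR 1) / ln 2 * ln (n%:R : R) = (9 + expR 1) * l.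
  by rewrite /l mulrAC mulrA.
have := ler_wpM2l (expR_ge0 (1 : R)) l_ge1.
rewrite natrM -natr1; nra.
Qed.

Section Instance.
Variables (R : realType) (n m : nat).
Hypothesis n_ge2 : (2 <= n)%N.
Local Notation N := (n%:R : R).
Local Notation I := (inst_I n).
Local Notation J := (inst_J n).
Local Notation E := (@inst_E n).
Local Notation w := (@inst_w R n).
Local Notation x := (@inst_x R n).
Local Notation step := (sampb_step E x).
Local Notation arrival := (sampb_arrival E x).

Lemma inst_N_gt0 : 0 < N.
Proof. by rewrite ltr0n (leq_trans _ n_ge2). Qed.

Lemma inst_N_neq0 : N != 0.
Proof. exact: lt0r_neq0 inst_N_gt0. Qed.

Lemma inst_N_ge1 : 1 <= N.
Proof. by rewrite ler1n (leq_trans _ n_ge2). Qed.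

Lemma inst_x_ge0 (i : I) (j : J) : 0 <= x i j.
Proof. by rewrite invr_ge0. Qed.

Lemma inst_sum_nbr (P : pred I) (j : J) (F : I -> R) :
  \sum_(i | E i j && P i) F i =
  (if P None then F None else 0) + \sum_(k | P (Some (j, k))) F (Some (j, k)).
Proof.
rewrite sumr_option /=; congr (_ + _).
rewrite (eq_big (fun p : 'I_n * 'I_n.-1 => (p.1 == j) && P (Some (p.1, p.2)))
           (fun p => F (Some (p.1, p.2)))); [|by case..].
rewrite -(pair_big_dep (fun j' => j' == j) (fun j' k => P (Some (j', k)))
            (fun j' k => F (Some (j', k)))).
by rewrite big_pred1_eq.
Qed.

Lemma inst_sum_Some_nbr (t : 'I_n * 'I_n.-1) (f : J -> R) :
  \sum_(j | E (Some t) j) f j = f t.1.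
Proof.
case: t => j k; rewrite (eq_bigl (pred1 j)) ?big_pred1_eq // => j'.
by rewrite /= eq_sym.
Qed.

Lemma inst_sum_nbr_const (j : J) (c : R) : \sum_(i | E i j) c = c * N.
Proof.
rewrite (eq_bigl (fun i => E i j && predT i)) => [|i]; last by rewrite andbT.
rewrite inst_sum_nbr sumr_const card_ord -mulrS prednK ?mulr_natr //.
exact: leq_trans n_ge2.
Qed.

Lemma inst_x_feasible (K : nat) : (2 * K <= n)%N -> lp_feasible E K x.
Proof.
move=> Kn; rewrite /inst_x; split; [|split; [|split]].
- by move=> i j _; exact: inst_x_ge0.
- by move=> j; rewrite inst_sum_nbr_const mulVf ?inst_N_neq0.
- case=> [t|]; first by rewrite inst_sum_Some_nbr invf_le1 ?inst_N_gt0 ?inst_N_ge1.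
  by rewrite sumr_const card_ord -[_ *+ n]mulr_natr mulVf ?inst_N_neq0.
move=> i S _ SK; rewrite sumr_const.
have [->|S_gt0] := posnP #|S|; first by rewrite mulr0n oppr0 expR0 subrr.
have S_half : N^-1 *+ #|S| <= 2^-1.
  rewrite -[_ *+ #|S|]mulr_natr ler_pdivrMl ?inst_N_gt0 // ler_pdivlMr //.
  by rewrite -natrM ler_nat muln2 -mul2n (leq_trans _ Kn) // leq_mul2l SK orbT.
have e_S : expR (- #|S|%:R) <= expR (-1) :> R by rewrite ler_expR lerN2 ler1n.
have := expRN1_le_half R; lra.
Qed.

Lemma lp_obj_inst_x : lp_obj E w x = 1 + (N ^+ 2)^-1 - (N ^+ 3)^-1.
Proof.
rewrite /lp_obj sumr_option /inst_x /inst_w sumr_const card_ord.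
under eq_bigr do rewrite inst_sum_Some_nbr.
rewrite sumr_const card_prod !card_ord mul1r.
rewrite -[_ *+ n]mulr_natr -[_ *+ (n * _)]mulr_natr natrM.
have -> : n.-1%:R = N - 1 by rewrite -{2}(prednK (leq_trans _ n_ge2)) // -natr1 addrK.
by field; exact: inst_N_neq0.
Qed.

Lemma lp_obj_inst_le (K : nat) (y : I -> J -> R) : lp_feasible E K y ->
  lp_obj E w y <= 1 + (N ^+ 2)^-1 - (N ^+ 3)^-1.
Proof.
move=> [_ [C1 [C2 _]]].
pose Y i := \sum_(j | E i j) y i j.
have sumY : Y None + \sum_t Y (Some t) <= N.
  rewrite -[X in X <= _](@sumr_option _ _ xpredT) (exchange_big_dep xpredT) //=.
  apply: le_trans (ler_sum _ (fun j _ => C1 j)) _.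
  by rewrite sumr_const card_ord.
rewrite /lp_obj sumr_option /inst_w mul1r -mulr_sumr -/(Y None).
have N3_gt0 : 0 < (N ^+ 3)^-1 by rewrite invr_gt0 exprn_gt0 ?inst_N_gt0.
have N3_le1 : (N ^+ 3)^-1 <= 1.
  by rewrite invf_le1 ?exprn_gt0 ?inst_N_gt0 ?exprn_ege1 ?inst_N_ge1.
have -> : (N ^+ 2)^-1 = (N ^+ 3)^-1 * N by field; exact: inst_N_neq0.
have := ler_wpM2l (ltW N3_gt0) sumY.
have : (1 - (N ^+ 3)^-1) * Y None <= 1 - (N ^+ 3)^-1.
  by rewrite -[X in _ <= X]mulr1 ler_wpM2l ?subr_ge0 //; exact: C2.
lra.
Qed.

Lemma inst_x_optimal (K : nat) : (2 * K <= n)%N -> lp_optimal E w K x.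
Proof.
move=> Kn; split; first exact: inst_x_feasible.
by move=> y /lp_obj_inst_le; rewrite lp_obj_inst_x.
Qed.

Definition matched_nbrs (M : {set I}) (j : J) : nat :=
  #|[set k | Some (j, k) \in M]|.
Definition free_nbrs (M : {set I}) (j : J) : nat :=
  #|[set k | Some (j, k) \notin M]|.

Lemma matched_free_nbrs (M : {set I}) (j : J) :
  (matched_nbrs M j + free_nbrs M j)%N = n.-1.
Proof.
rewrite /free_nbrs (_ : [set k | _ \notin M] = ~: [set k | Some (j, k) \in M]).
  by rewrite cardsC card_ord.
by apply/setP => k; rewrite !inE.
Qed.

Lemma matched_nbrs_set0 (j : J) : matched_nbrs set0 j = 0%N.
Proof. by apply/eqP; rewrite cards_eq0; apply/eqP/setP => k; rewrite !inE. Qed.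

Lemma matched_nbrs_setU1 (M : {set I}) (j0 : J) (k0 : 'I_n.-1) (j : J) :
  Some (j0, k0) \notin M ->
  matched_nbrs (Some (j0, k0) |: M) j = (matched_nbrs M j + (j == j0))%N.
Proof.
move=> j0k0M; rewrite /matched_nbrs; have [->|j_neq] := eqVneq j j0.
  rewrite (_ : [set k | _ \in _ |: M] = k0 |: [set k | Some (j0, k) \in M]).
    by rewrite cardsU1 inE j0k0M addnC.
  by apply/setP => k; rewrite !inE; congr (_ || _); apply/eqP/eqP => [[]|->].
rewrite addn0; apply: eq_card => k; rewrite !inE.
by case: eqP => // -[/eqP]; rewrite (negbTE j_neq).
Qed.

Definition load (M : {set I}) : R := \sum_j 2 ^+ matched_nbrs M j.

Lemma load_ge0 (M : {set I}) : 0 <= load M.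
Proof. by apply: sumr_ge0 => j _; rewrite exprn_ge0. Qed.

Lemma load_set0 : load set0 = N.
Proof.
rewrite /load (eq_bigr (fun _ => 1)) ?sumr_const ?card_ord // => j _.
by rewrite matched_nbrs_set0.
Qed.

Lemma load_setU1 (M : {set I}) (j : J) (k : 'I_n.-1) : Some (j, k) \notin M ->
  load (Some (j, k) |: M) = load M + 2 ^+ matched_nbrs M j.
Proof.
move=> jkM; rewrite /load (bigD1 j) //= [in RHS](bigD1 j) //=.
rewrite matched_nbrs_setU1 // eqxx addn1 exprS mulr2n mulrDl mul1r.
under eq_bigr => j' j'j do rewrite matched_nbrs_setU1 // (negbTE j'j) addn0.
by rewrite addrAC.
Qed.

Definition min_free : nat := (n.-1 - m)%N.
Definition surv : R := min_free%:R / min_free.+1%:R.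
Definition growth : R := 1 + N^-1.
(* [coef] is tuned so that [coef * (1 - surv) = (n 2^(m+1))^-1] ([coef_surv]):
   the expected growth of the load term then pays for the arrivals of types
   beyond the threshold ([istar_bound_step]). *)
Definition coef : R := min_free.+1%:R / (N * 2 ^+ m.+1).

(* While i* is unmatched in [M], [istar_bound r M] bounds the probability that
   it gets matched within the last [r] rounds; [small_bound r M] charges n^-3
   for each of the at most [#|M| + r] agents matched at the end. *)
Definition istar_bound (r : nat) (M : {set I}) : R :=
  1 - surv ^+ r + coef * growth ^+ r * load M.
Definition small_bound (r : nat) (M : {set I}) : R :=
  (N ^+ 3)^-1 * (#|M| + r)%:R.
Definition pot (r : nat) (M : {set I}) : R :=
  small_bound r M + if None \in M then 1 else Num.min 1 (istar_bound r M).

Lemma surv_ge0 : 0 <= surv.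
Proof. by rewrite divr_ge0. Qed.

Lemma surv_le1 : surv <= 1.
Proof. by rewrite ler_pdivrMr ?ltr0n // mul1r ler_nat. Qed.

Lemma growth_ge1 : 1 <= growth.
Proof. by rewrite lerDl invr_ge0. Qed.

Lemma growth_ge0 : 0 <= growth.
Proof. exact: le_trans ler01 growth_ge1. Qed.

Lemma coef_ge0 : 0 <= coef.
Proof. by rewrite divr_ge0 // mulr_ge0 ?exprn_ge0. Qed.

Lemma istar_bound_ge (r : nat) (M : {set I}) :
  1 - surv ^+ r <= istar_bound r M.
Proof.
by rewrite lerDl mulr_ge0 ?load_ge0 // mulr_ge0 ?coef_ge0 ?exprn_ge0 ?growth_ge0.
Qed.

Lemma istar_bound_ge0 (r : nat) (M : {set I}) : 0 <= istar_bound r M.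
Proof.
apply: le_trans (istar_bound_ge r M).
by rewrite subr_ge0 exprn_ile1 ?surv_ge0 ?surv_le1.
Qed.

Lemma small_bound_setU1 (r : nat) (M : {set I}) (i : I) :
  i \notin M -> small_bound r (i |: M) = small_bound r.+1 M.
Proof. by move=> iM; rewrite /small_bound cardsU1 iM add1n addnS. Qed.

Lemma small_boundS (r : nat) (M : {set I}) : small_bound r M <= small_bound r.+1 M.
Proof. by rewrite ler_wpM2l ?invr_ge0 ?exprn_ge0 // ler_nat addnS. Qed.

Lemma small_bound_setU1_le (r : nat) (M : {set I}) (i : I) :
  small_bound r (i |: M) <= small_bound r.+1 M.
Proof.
rewrite ler_wpM2l ?invr_ge0 ?exprn_ge0 // ler_nat addnS -addSn leq_add2r.
by rewrite cardsU1 -add1n leq_add2r leq_b1.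
Qed.

Lemma istar_bound_setU1 (r : nat) (M : {set I}) (j : J) (k : 'I_n.-1) :
  Some (j, k) \notin M -> istar_bound r (Some (j, k) |: M) =
  istar_bound r M + coef * growth ^+ r * 2 ^+ matched_nbrs M j.
Proof. by move=> jkM; rewrite /istar_bound load_setU1 // mulrDr addrA. Qed.

Lemma pot0_ge (M : {set I}) : \sum_(i in M) w i <= pot 0 M.
Proof.
rewrite /pot /small_bound addn0.
apply: (@le_trans _ _ (\sum_(i in M) ((N ^+ 3)^-1 + (i == None)%:R))).
  apply: ler_sum => -[t|] _ /=; rewrite /inst_w ?addr0 //.
  by rewrite lerDr invr_ge0 exprn_ge0.
rewrite big_split /= sumr_const -[_ *+ #|M|]mulr_natr lerD2l.
have -> : \sum_(i in M) (i == None)%:R = (None \in M)%:R :> R.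
  have [iM|iM] := boolP (None \in M).
    by rewrite (bigD1 None) //= big1 ?addr0 // => i /andP[_ /negbTE ->].
  rewrite big1 // => i iM'; rewrite (_ : i == None = false) //.
  by apply: contraNF iM => /eqP <-.
by case: (None \in M) => //=; rewrite le_min ler01 istar_bound_ge0.
Qed.

Lemma pot_step_matched (r : nat) (M : {set I}) :
  None \in M -> step (pot r) M <= pot r.+1 M.
Proof.
move=> iM; apply: sampb_step_le_const => [|j].
  by rewrite card_ord (leq_trans _ n_ge2).
apply: sampb_arrival_le => [i j' _||i _ _]; first exact: inst_x_ge0.
  by rewrite /pot iM /= lerD2r small_boundS.
by rewrite /pot in_setU1 iM orbT /= lerD2r small_bound_setU1_le.
Qed.

Lemma inst_arrival_free (f : {set I} -> R) (M : {set I}) (j : J) :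
  None \notin M ->
  arrival f M j =
  (f (None |: M) + \sum_(k | Some (j, k) \notin M) f (Some (j, k) |: M))
    / (1 + (free_nbrs M j)%:R).
Proof.
move=> iM; rewrite /sampb_arrival /inst_x /=.
rewrite (inst_sum_nbr (fun i => i \notin M)) iM sumr_const_cond -/(free_nbrs M j).
rewrite -mulr_sumr (inst_sum_nbr (fun i => i \notin M)) iM.
have -> : N^-1 + N^-1 *+ free_nbrs M j = N^-1 * (1 + (free_nbrs M j)%:R).
  by rewrite mulrDr mulr1 mulr_natr.
have d1_gt0 : 0 < 1 + (free_nbrs M j)%:R :> R by rewrite ltr_wpDr.
rewrite mulf_eq0 invr_eq0 (negbTE inst_N_neq0) (gt_eqF d1_gt0) /=.
by field; rewrite inst_N_neq0 // gt_eqF.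
Qed.

Lemma pot_setU1_None (r : nat) (M : {set I}) :
  None \notin M -> pot r (None |: M) = small_bound r.+1 M + 1.
Proof. by move=> iM; rewrite /pot small_bound_setU1 // setU11. Qed.

Lemma pot_setU1_Some (r : nat) (M : {set I}) (j : J) (k : 'I_n.-1) :
  None \notin M -> Some (j, k) \notin M ->
  pot r (Some (j, k) |: M) = small_bound r.+1 M +
    Num.min 1 (istar_bound r M + coef * growth ^+ r * 2 ^+ matched_nbrs M j).
Proof.
move=> iM jkM; rewrite /pot small_bound_setU1 // istar_bound_setU1 //.
by rewrite in_setU1 (negbTE iM).
Qed.

Lemma pot_arrival_free (r : nat) (M : {set I}) (j : J) : None \notin M ->
  arrival (pot r) M j = small_bound r.+1 M +
    (1 + (free_nbrs M j)%:R *
       Num.min 1 (istar_bound r M + coef * growth ^+ r * 2 ^+ matched_nbrs M j))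
    / (1 + (free_nbrs M j)%:R).
Proof.
move=> iM; rewrite inst_arrival_free // pot_setU1_None //.
under eq_bigr => k jkM do rewrite pot_setU1_Some //.
rewrite sumr_const_cond -/(free_nbrs M j) -[_ *+ free_nbrs M j]mulr_natr.
have d1_gt0 : 0 < 1 + (free_nbrs M j)%:R :> R by rewrite ltr_wpDr.
by field; rewrite gt_eqF.
Qed.

Lemma pot_arrival_free_le1 (r : nat) (M : {set I}) (j : J) : None \notin M ->
  arrival (pot r) M j <= small_bound r.+1 M + 1.
Proof. by move=> iM; rewrite pot_arrival_free // lerD2l mean_one_min_le1. Qed.

Lemma pot_arrival_free_le (r : nat) (M : {set I}) (j : J) : None \notin M ->
  arrival (pot r) M j <= small_bound r.+1 M +
    (1 - surv + surv * istar_bound r M +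
     (surv * coef * growth ^+ r + surv ^+ r / 2 ^+ m.+1) * 2 ^+ matched_nbrs M j).
Proof.
move=> iM; rewrite pot_arrival_free // lerD2l.
have := matched_free_nbrs M j.
set c := matched_nbrs M j; set d := free_nbrs M j => cd.
set X := istar_bound r M + _.
have -> : 1 - surv + surv * istar_bound r M +
    (surv * coef * growth ^+ r + surv ^+ r / 2 ^+ m.+1) * 2 ^+ c =
  1 - surv * (1 - X) + surv ^+ r * (2 ^+ c / 2 ^+ m.+1) by rewrite /X; ring.
apply: mean_one_min_le.
- exact: ler0n.
- by rewrite surv_ge0 surv_le1.
- have := istar_bound_ge r M; have : 0 <= coef * growth ^+ r * 2 ^+ c.
    by rewrite mulr_ge0 ?exprn_ge0 // mulr_ge0 ?coef_ge0 ?exprn_ge0 ?growth_ge0.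
  rewrite /X; lra.
- by rewrite exprn_ge0 ?surv_ge0.
- by rewrite divr_ge0 ?exprn_ge0.
(* Below the threshold i* is spared with probability at least [surv]; above it
   the load term [2 ^+ c / 2 ^+ m.+1 >= 1] pays. *)
- have [c_le|c_gt] := leqP c m; [left|right].
    rewrite /surv mulrAC ler_pdivrMr // -(natrD _ 1 d) -!natrM ler_nat.
    by rewrite /min_free; nia.
  by rewrite ler_pdivlMr ?exprn_gt0 // mul1r ler_eXn2l // ltr1n.
Qed.

Lemma coef_surv : coef * (1 - surv) = (N * 2 ^+ m.+1)^-1.
Proof.
rewrite /coef /surv; field.
by rewrite inst_N_neq0 // expf_neq0 ?pnatr_eq0 // addrC natr1 pnatr_eq0.
Qed.

Lemma istar_bound_step (r : nat) (M : {set I}) :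
  1 - surv + surv * istar_bound r M +
    (surv * coef * growth ^+ r + surv ^+ r / 2 ^+ m.+1) * load M / N
  <= istar_bound r.+1 M.
Proof.
have P_inv : (2 ^+ m.+1)^-1 = coef * (1 - surv) * N :> R.
  by rewrite coef_surv invfM mulrAC mulVf ?inst_N_neq0 // mul1r.
rewrite -subr_ge0.
have -> : istar_bound r.+1 M - (1 - surv + surv * istar_bound r M +
    (surv * coef * growth ^+ r + surv ^+ r / 2 ^+ m.+1) * load M / N) =
  load M / (N * 2 ^+ m.+1) * (growth ^+ r.+1 - surv ^+ r).
  rewrite -coef_surv /istar_bound P_inv !exprS.
  move: (surv ^+ r) (growth ^+ r) (load M) => u g S.
  by rewrite /growth; field; exact: inst_N_neq0.
rewrite mulr_ge0 ?divr_ge0 ?load_ge0 ?mulr_ge0 ?exprn_ge0 // subr_ge0.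
apply: le_trans (exprn_ile1 r surv_ge0 surv_le1) _.
by rewrite exprn_ege1 ?growth_ge1.
Qed.

Lemma pot_step_free (r : nat) (M : {set I}) :
  None \notin M -> step (pot r) M <= pot r.+1 M.
Proof.
move=> iM; rewrite [pot r.+1 M]/pot (negbTE iM) /=.
have [_|_] := leP 1 (istar_bound r.+1 M).
  apply: sampb_step_le_const => [|j]; last exact: pot_arrival_free_le1.
  by rewrite card_ord (leq_trans _ n_ge2).
apply: le_trans (sampb_step_le_mean (fun j => pot_arrival_free_le r j iM)) _.
rewrite big_split big_split /= !sumr_const card_ord -mulr_sumr -/(load M).
rewrite -[small_bound _ _ *+ n]mulr_natr -[(1 - surv + _) *+ n]mulr_natr.
have -> : forall s a c : R, N^-1 * (s * N + (a * N + c)) = s + (a + c / N).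
  by move=> s a c; field; exact: inst_N_neq0.
by rewrite lerD2l istar_bound_step.
Qed.

Lemma sampb_val_le_pot (r : nat) (M : {set I}) :
  sampb_val E w x r M <= pot r M.
Proof.
apply: sampb_val_le => [i j _|M'|r' M']; first exact: inst_x_ge0.
  exact: pot0_ge.
by have [/pot_step_matched|/pot_step_free] := boolP (None \in M').
Qed.

Lemma sampb_value_le : sampb_value E w x <=
  (N ^+ 2)^-1 + (1 - surv ^+ n + min_free.+1%:R * growth ^+ n / 2 ^+ m.+1).
Proof.
apply: le_trans (sampb_val_le_pot _ _) _; rewrite card_ord.
rewrite /pot /small_bound inE cards0 add0n /= /istar_bound load_set0.
have -> : (N ^+ 3)^-1 * N = (N ^+ 2)^-1 by field; exact: inst_N_neq0.
have -> : coef * growth ^+ n * N = min_free.+1%:R * growth ^+ n / 2 ^+ m.+1.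
  by rewrite /coef; field; rewrite inst_N_neq0 // expf_neq0 // pnatr_eq0.
by rewrite lerD2l ge_min lexx orbT.
Qed.

End Instance.

Lemma sampb_value_inst_le (R : realType) (n : nat) : (32 <= n)%N ->
  sampb_value (@inst_E n) (@inst_w R n) (@inst_x R n) <=
  1 - expR (-1) + (9 + expR 1) / ln 2 * ln (n%:R : R) / n%:R.
Proof.
move=> n_ge32; have n_ge2 : (2 <= n)%N by lia.
have n_gt0 : 0 < n%:R :> R by rewrite ltr0n; lia.
pose t := trunc_log 2 n; pose m := (2 * t).+1.
have tn : (2 ^ t <= n)%N by apply: trunc_logP; lia.
have nt : (n < 2 ^ t.+1)%N by apply: trunc_log_ltn.
have t4n : (4 * t.+1 <= n)%N.
  by apply: leq_trans (mul4S_leq_exp2 _) tn; apply: trunc_log_max.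
apply: le_trans (sampb_value_le R m n_ge2) _.
rewrite /surv /growth; set L := min_free n m.
have L_eq : L = (n - 2 * t.+1)%N by rewrite /L /min_free /m; lia.
have L_gt0 : (0 < L)%N by rewrite L_eq; lia.
have L_gt0' : 0 < L%:R :> R by rewrite ltr0n.
have surv_pow :
    1 - (L%:R / L.+1%:R) ^+ n <= 1 - expR (-1) + (4 * t.+1)%:R / n%:R :> R.
  have L_le : (L <= n)%N by rewrite L_eq leq_subr.
  have frac_le : (n%:R - L%:R) / L%:R <= (4 * t.+1)%:R / n%:R :> R.
    rewrite ler_pdivrMr // mulrAC ler_pdivlMr // -natrB // -!natrM ler_nat L_eq.
    nia.
  have := ratio_pow_ge R L_gt0 L_le; lra.
have sq_le : n%:R ^+ 2 <= 2 ^+ m.+1 :> R.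
  rewrite -!natrX ler_nat (_ : m.+1 = t.+1 * 2)%N; last by rewrite /m; lia.
  by rewrite expnM leq_exp2r // ltnW.
have tail_le : L.+1%:R * (1 + n%:R^-1) ^+ n / 2 ^+ m.+1 <= expR 1 / n%:R :> R.
  have base_ge0 : 0 <= 1 + n%:R^-1 :> R by rewrite addr_ge0 ?invr_ge0.
  have num_le : L.+1%:R * (1 + n%:R^-1) ^+ n <= n%:R * expR 1 :> R.
    rewrite ler_pM ?ler0n ?exprn_ge0 // ?ler_nat; first by rewrite L_eq; lia.
    by apply: pow_1Dinv_le_expR1; lia.
  have -> : expR 1 / n%:R = n%:R * expR 1 / n%:R ^+ 2 :> R.
    by field; exact: lt0r_neq0.
  rewrite ler_pM ?mulr_ge0 ?ler0n ?invr_ge0 ?exprn_ge0 //.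
  by rewrite lef_pV2 ?posrE ?exprn_gt0.
have n2_le : (n%:R ^+ 2)^-1 <= n%:R^-1 :> R.
  by rewrite lef_pV2 ?posrE ?exprn_gt0 // expr2 ler_peMl // ler1n; lia.
have ln_term : ((4 * t.+1)%:R + expR 1 + 1) / n%:R <=
    (9 + expR 1) / ln 2 * ln (n%:R : R) / n%:R.
  by rewrite ler_wpM2r ?invr_ge0 ?ler0n // log2_affine_le_ln.
lra.
Qed.

Lemma sampb_value_inst_ratio_le (R : realType) (n : nat) : (32 <= n)%N ->
  sampb_value (@inst_E n) (@inst_w R n) (@inst_x R n) <=
  (1 - expR (-1) + (9 + expR 1) / ln 2 * ln (n%:R : R) / n%:R) *
    lp_obj (@inst_E n) (@inst_w R n) (@inst_x R n).
Proof.
move=> n_ge32; have n_ge2 : (2 <= n)%N by lia.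
apply: le_trans (sampb_value_inst_le R n_ge32) (ler_peMr _ _).
  rewrite addr_ge0 ?subr_ge0 ?expR_le1 ?lerN10 // !mulr_ge0 ?invr_ge0 ?ler0n //.
  - by rewrite addr_ge0 ?expR_ge0.
  - by rewrite ltW // ln_gt0 // ltr1n.
  - by rewrite ln_ge0 // ler1n; lia.
rewrite lp_obj_inst_x // -addrA lerDl subr_ge0.
by rewrite lef_pV2 ?posrE ?exprn_gt0 ?ltr0n ?ler_eXn2l ?ltr1n //; lia.
Qed.

Theorem mainTheorem10 (R : realType) (K : nat) (hK : (1 <= K)%N) :
  exists (N : nat) (C : R),
    forall n : nat, (2 <= n)%N -> (N <= n)%N ->
      lp_optimal (@inst_E n) (@inst_w R n) K (@inst_x R n) /\
      lp_obj (@inst_E n) (@inst_w R n) (@inst_x R n)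
        = 1 + (n%:R ^+ 2)^-1 - (n%:R ^+ 3)^-1 /\
      sampb_value (@inst_E n) (@inst_w R n) (@inst_x R n)
        <= (1 - expR (-1) + C * ln (n%:R) / n%:R)
           * lp_obj (@inst_E n) (@inst_w R n) (@inst_x R n).
Proof.
exists (32 + 2 * K)%N, ((9 + expR 1) / ln 2) => n n_ge2 n_large.
split; first by apply: inst_x_optimal => //; lia.
split; first exact: lp_obj_inst_x.
by apply: sampb_value_inst_ratio_le; lia.
Qed.
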